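(* Let $e\in\mathbb{S}$, $k=\mathbb{Z}[\mu_e]$, $M$ a $k$-module, $E=\mathrm{End}_k(M)$, and let $A\subseteq E$ be a $k$-subalgebra that is $p$-good and satisfies $(1-\zeta_p)A=A\cap(1-\zeta_p)E$ for every prime $p$ dividing $e$ (where $\zeta_p$ is a primitive $p$-th root of unity). If $\rho,\sigma\in A$ are $\mu_e$-diagonalizable and the subgroup $\langle\rho,\sigma\rangle$ of $\mathrm{Aut}_k(M)$ is torsion (every element has finite order), then $\rho$ and $\sigma$ commute.
   Context: Steinitz numbers $\mathbb{S}$: formal products $\prod_p p^{n_p}$ over primes with $n_p\in\mathbb{Z}_{\ge0}\cup\{\infty\}$; a prime $p$ divides $e$ if $n_p\ge1$. $\mu_e\subseteq\mathbb{C}^*$: roots of unity of order dividing $e$ (i.e. $\mathrm{ord}_p$ of the order is $\le n_p$ for all $p$); $\mathbb{Z}[\mu_e]$ the subring of $\mathbb{C}$ it generates. For $f\in\mathrm{End}_k(M)$, $M(f,\zeta)=\{x: f(x)=\zeta x\}$, and $f$ is $\mu_e$-diagonalizable if $\bigoplus_{\zeta\in\mu_e}M(f,\zeta)\to M$ is an isomorphism. A $k$-subalgebra $A\subseteq\mathrm{End}_k(M)$ is $p$-good if $p(1-ps)$ is injective on $M$ for every $s\in A$. *)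

From HB Require Import structures.
From mathcomp Require Import all_boot all_order all_algebra all_field.
Set Implicit Arguments. Unset Strict Implicit. Unset Printing Implicit Defensive.
Import Order.TTheory GRing.Theory Num.Theory.
Local Open Scope ring_scope.

(* Steinitz numbers: e p = Some n_p (finite exponent) or None (exponent oo).
   Only the values at primes p are meaningful. *)
Definition steinitz := nat -> option nat.

Definition le_exp (m : nat) (np : option nat) : Prop :=
  match np with None => True | Some n => (m <= n)%N end.

Definition st_dvd (p : nat) (e : steinitz) : Prop := le_exp 1 (e p).

Definition in_mu (e : steinitz) (z : algC) : Prop :=
  exists n : nat, (0 < n)%N /\ n.-primitive_root z /\
    forall p, prime p -> le_exp (logn p n) (e p).

(* Z[mu_e] : the subring of C (here: of algC, which contains all roots of
   unity) generated by mu_e, i.e. the smallest subring containing mu_e. *)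
Definition in_Zmu (e : steinitz) (x : algC) : Prop :=
  forall S : algC -> Prop,
    S 1 ->
    (forall a b, S a -> S b -> S (a - b)) ->
    (forall a b, S a -> S b -> S (a * b)) ->
    (forall z, in_mu e z -> S z) ->
    S x.

Definition is_End (k : pzRingType) (M : lmodType k) (f : M -> M) : Prop :=
  forall (a : k) (x y : M), f (a *: x + y) = a *: f x + f y.

Definition is_subalg (k : pzRingType) (M : lmodType k) (A : (M -> M) -> Prop)
  : Prop :=
  (forall f, A f -> is_End f) /\
  [/\ A (fun x => x),
      A (fun _ => 0),
      (forall f g, A f -> A g -> A (fun x => f x + g x)),
      (forall (a : k) f, A f -> A (fun x => a *: f x)) &
      (forall f g, A f -> A g -> A (fun x => f (g x)))].

Definition p_good (k : pzRingType) (M : lmodType k) (p : nat)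
  (A : (M -> M) -> Prop) : Prop :=
  forall s, A s -> injective (fun x : M => (x - (s x) *+ p) *+ p).

Definition eigen (k : pzRingType) (M : lmodType k) (f : M -> M) (z : k) (x : M)
  : Prop := f x = z *: x.

(* f is mu_e-diagonalizable: the canonical map from the direct sum
   (+)_{zeta in mu_e} M(f, zeta) to M is bijective.  Eigenvalues are elements
   of k, and iota : k -> algC identifies k with Z[mu_e]. A finitely supported
   family in the direct sum is given by a duplicate-free list s of eigenvalues
   and the components v z. *)
Definition mu_diag (e : steinitz) (k : pzRingType) (iota : k -> algC)
  (M : lmodType k) (f : M -> M) : Prop :=
  (forall x : M, exists (s : seq k) (v : k -> M),
      [/\ uniq s, (forall z, z \in s -> in_mu e (iota z)),
          (forall z, z \in s -> eigen f z (v z)) &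
          x = \sum_(z <- s) v z]) /\
  (forall (s : seq k) (v : k -> M),
      uniq s -> (forall z, z \in s -> in_mu e (iota z)) ->
      (forall z, z \in s -> eigen f z (v z)) ->
      \sum_(z <- s) v z = 0 -> forall z, z \in s -> v z = 0).

Inductive gen2 (M : Type) (r s : M -> M) : (M -> M) -> Prop :=
  | gen2_id : gen2 r s (fun x => x)
  | gen2_r : gen2 r s r
  | gen2_s : gen2 r s s
  | gen2_comp f g : gen2 r s f -> gen2 r s g -> gen2 r s (fun x => f (g x))
  | gen2_inv f g : gen2 r s f -> (forall x, f (g x) = x) ->
                   (forall x, g (f x) = x) -> gen2 r s g.

Definition torsion2 (M : Type) (r s : M -> M) : Prop :=
  forall g, gen2 r s g -> exists n : nat, (0 < n)%N /\ iter n g = (fun x => x).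

From HB Require Import structures.
From mathcomp Require Import all_boot all_order all_algebra all_field.
From mathcomp Require Import boolp ring zify.
Import Order.TTheory GRing.Theory Num.Theory.
Local Open Scope ring_scope.
Set Implicit Arguments. Unset Strict Implicit. Unset Printing Implicit Defensive.

(* Write [lambda_p = 1 - zeta_p]. Since an element of finite order is a product of
   powers of itself of prime-power order, it suffices to show that two elements [f], [g]
   of [A] that are mu_e-diagonalizable and lie in <rho, sigma>, of orders [p^a] and
   [q^b], commute; by induction on [a + b] we may assume that [f^p] commutes with [g] and
   [f] with [g^q]. If [p] does not divide [e], such an [f] is trivial. Otherwise, as
   [x^p = y^p] forces [x = y mod lambda_p] for roots of unity, the commutator
   [c = f g f^-1 g^-1] lies in [1 + lambda_p lambda_q E], hence in [1 + lambda_p lambda_q A]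
   by saturation. Finally, for [t] in [lambda_p lambda_q A] we have [(1 + t)^l = 1 + F t]
   with [F] injective by p-goodness, so [c], having finite order, is [1]. *)

Section FiniteOrder.
Variable R : pzRingType.

Lemma commr_coprime_powers (f g : R) n1 n2 : coprime n1 n2 -> (0 < n1)%N ->
  f ^+ (n1 * n2) = 1 -> GRing.comm (f ^+ n1) g -> GRing.comm (f ^+ n2) g ->
  GRing.comm f g.
Proof.
move=> /eqnP co12 n1_gt0 f12 c1 c2.
have [a _] := Bezoutl n2 n1_gt0; rewrite co12 => /dvdnP [b ab].
have -> : f = (f ^+ n1) ^+ b * (f ^+ n2) ^+ (a * n1.-1).
  rewrite -!exprM -exprD (mulnC n1) -ab.
  have -> : (1 + a * n2 + n2 * (a * n1.-1) = 1 + n1 * n2 * a)%N by nia.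
  by rewrite exprD expr1 exprM f12 expr1n mulr1.
by apply/commr_sym/commrM; apply/commrX/commr_sym.
Qed.

Lemma commr_finite_order (P : R -> Prop) (g : R) :
  (forall f n, P f -> P (f ^+ n)) ->
  (forall f p a, prime p -> P f -> f ^+ (p ^ a) = 1 -> GRing.comm f g) ->
  forall f n, P f -> (0 < n)%N -> f ^+ n = 1 -> GRing.comm f g.
Proof.
move=> PX comm_pp f n; elim/ltn_ind: n f => n IH f Pf n_gt0 fn.
have [n_le1|n_gt1] := leqP n 1.
  have n1 : n = 1%N by apply/eqP; rewrite eqn_leq n_le1.
  by move: fn; rewrite n1 expr1 => ->; apply/commr_sym/commr1.
have p_pr := pdiv_prime n_gt1; set p := pdiv n in p_pr *.
have [n' co_pn' n_eq] := pfactor_coprime p_pr n_gt0.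
have [n'1|n'_neq1] := eqVneq n' 1%N.
  by apply: (comm_pp f p (logn p n)); rewrite // -(mul1n (p ^ _)%N) -n'1 -n_eq.
set m := (p ^ logn p n)%N in n_eq; have n'_gt0 : (0 < n')%N.
  by move: n_gt0; rewrite n_eq muln_gt0 => /andP [].
have m_gt1 : (1 < m)%N.
  by rewrite -[1%N](expn0 p) ltn_exp2l ?prime_gt1 // logn_gt0 mem_primes p_pr n_gt0 pdiv_dvd.
have n'_gt1 : (1 < n')%N by rewrite ltn_neqAle eq_sym n'_neq1.
apply: (@commr_coprime_powers f g m n').
- by rewrite /m coprimeXl.
- exact: ltnW.
- by rewrite mulnC -n_eq.
- apply: (IH n' _ _ (PX _ _ Pf)) => //; first by rewrite n_eq ltn_Pmulr.
  by rewrite -exprM mulnC -n_eq.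
- apply: (IH m _ _ (PX _ _ Pf)); first by rewrite n_eq ltn_Pmull // ltnW.
    exact: ltnW.
  by rewrite -exprM -n_eq.
Qed.

End FiniteOrder.

Lemma onerBX (R : comPzRingType) (z : R) j :
  1 - z ^+ j = (1 - z) * \sum_(l < j) z ^+ l.
Proof. by rewrite -opprB subrX1 -mulNr opprB. Qed.

Lemma prod_dvd_prod (R : comPzRingType) (I : eqType) (r : seq I) (F G : I -> R) :
  {in r, forall i, exists t, F i = G i * t} ->
  exists t, \prod_(i <- r) F i = \prod_(i <- r) G i * t.
Proof.
elim: r => [|a r IH] FG; first by exists 1; rewrite !big_nil mulr1.
rewrite !big_cons; have [ta ->] := FG a (mem_head _ _).
have [t ->] := IH (fun i ir => FG i (mem_behead (s := a :: r) ir)).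
by exists (ta * t); rewrite mulrACA.
Qed.

Lemma sum_undup_map (V : nmodType) (T U : eqType) (s : seq T) (g : T -> U) (F : T -> V) :
  \sum_(z <- s) F z = \sum_(w <- undup (map g s)) \sum_(z <- s | g z == w) F z.
Proof.
under [RHS]eq_bigr do rewrite big_mkcond; rewrite exchange_big /=.
apply: eq_big_seq => z zs; rewrite -big_mkcond -big_filter.
rewrite (@eq_filter _ _ (pred1 (g z))) => [|w]; last exact: eq_sym.
by rewrite filter_pred1_uniq ?undup_uniq ?mem_undup ?map_f // big_seq1.
Qed.

Lemma sum_scaler_ex (R : pzRingType) (V : lmodType R) (I : eqType) (r : seq I)
    (P : pred I) (F : I -> V) (c : R) :
  {in r, forall i, P i -> exists y, F i = c *: y} ->
  exists y, \sum_(i <- r | P i) F i = c *: y.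
Proof.
elim: r => [|a r IH] cF; first by exists 0; rewrite big_nil scaler0.
rewrite big_cons; have [y ->] := IH (fun i ir => cF i (mem_behead (s := a :: r) ir)).
case: ifP => [Pa|_]; last by exists y.
by have [ya ->] := cF a (mem_head _ _) Pa; exists (ya + y); rewrite scalerDr.
Qed.

Lemma le_exp_trans m l np : (l <= m)%N -> le_exp m np -> le_exp l np.
Proof. by case: np => //= n lm; apply: leq_trans. Qed.

Section Endomorphisms.
Variables (k : comNzRingType) (M : lmodType k).

Record endo := Endo { endo_fun :> M -> M ; endo_linear : is_End endo_fun }.

HB.instance Definition _ (f : endo) :=
  GRing.isLinear.Build k M M *:%R (endo_fun f) (endo_linear f).

Lemma endoP (f g : endo) : f =1 g -> f = g.
Proof.
case: f g => f lf [g lg] /= /funext fg; subst g.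
by congr Endo; apply: Prop_irrelevance.
Qed.

HB.instance Definition _ := gen_eqMixin endo.
HB.instance Definition _ := gen_choiceMixin endo.

Fact endo_add_linear (f g : endo) : is_End (fun x => f x + g x).
Proof. by move=> a x y; rewrite !linearP scalerDr addrACA. Qed.
Fact endo_opp_linear (f : endo) : is_End (fun x => - f x).
Proof. by move=> a x y; rewrite linearP opprD scalerN. Qed.
Fact endo_zero_linear : is_End (fun _ : M => 0).
Proof. by move=> a x y; rewrite scaler0 addr0. Qed.
Fact endo_comp_linear (f g : endo) : is_End (fun x => f (g x)).
Proof. by move=> a x y; rewrite !linearP. Qed.
Fact endo_scale_linear (a : k) (f : endo) : is_End (fun x => a *: f x).
Proof. by move=> b x y; rewrite linearP scalerDr !scalerA mulrC. Qed.

Definition endo_add f g := Endo (endo_add_linear f g).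
Definition endo_opp f := Endo (endo_opp_linear f).
Definition endo_zero := Endo endo_zero_linear.
Definition endo_one := Endo (fun a x y => erefl : (fun x : M => x) _ = _).
Definition endo_comp f g := Endo (endo_comp_linear f g).
Definition endo_scale a f := Endo (endo_scale_linear a f).

Fact endo_addA : associative endo_add.
Proof. by move=> f g h; apply: endoP => x /=; rewrite addrA. Qed.
Fact endo_addC : commutative endo_add.
Proof. by move=> f g; apply: endoP => x /=; rewrite addrC. Qed.
Fact endo_add0 : left_id endo_zero endo_add.
Proof. by move=> f; apply: endoP => x /=; rewrite add0r. Qed.
Fact endo_addN : left_inverse endo_zero endo_opp endo_add.
Proof. by move=> f; apply: endoP => x /=; rewrite addNr. Qed.
HB.instance Definition _ :=
  GRing.isZmodule.Build endo endo_addA endo_addC endo_add0 endo_addN.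

Fact endo_compA : associative endo_comp. Proof. by move=> f g h; apply: endoP. Qed.
Fact endo_comp1 : left_id endo_one endo_comp. Proof. by move=> f; apply: endoP. Qed.
Fact endo_compr1 : right_id endo_one endo_comp. Proof. by move=> f; apply: endoP. Qed.
Fact endo_compDl : left_distributive endo_comp +%R.
Proof. by move=> f g h; apply: endoP. Qed.
Fact endo_compDr : right_distributive endo_comp +%R.
Proof. by move=> f g h; apply: endoP => x /=; rewrite linearD. Qed.
HB.instance Definition _ := GRing.Zmodule_isPzRing.Build endo
  endo_compA endo_comp1 endo_compr1 endo_compDl endo_compDr.

Fact endo_scaleA a b f : endo_scale a (endo_scale b f) = endo_scale (a * b) f.
Proof. by apply: endoP => x /=; rewrite scalerA. Qed.
Fact endo_scale1 : left_id 1 endo_scale.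
Proof. by move=> f; apply: endoP => x /=; rewrite scale1r. Qed.
Fact endo_scaleDr : right_distributive endo_scale +%R.
Proof. by move=> a f g; apply: endoP => x /=; rewrite scalerDr. Qed.
Fact endo_scaleDl f : {morph endo_scale^~ f : a b / a + b}.
Proof. by move=> a b; apply: endoP => x /=; rewrite scalerDl. Qed.
HB.instance Definition _ := GRing.Zmodule_isLmodule.Build k endo
  endo_scaleA endo_scale1 endo_scaleDr endo_scaleDl.

Lemma endo_mulE (f g : endo) x : (f * g) x = f (g x). Proof. by []. Qed.
Lemma endo_expE (f : endo) n x : (f ^+ n) x = iter n f x.
Proof. by elim: n => [|n IH]; rewrite ?expr0 // exprS endo_mulE IH. Qed.
Lemma endo_natE n x : (n%:R : endo) x = x *+ n.
Proof. by elim: n => [|n IH]; rewrite ?mulr0n // !mulrS /= IH. Qed.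
Lemma scaler_mull a (f g : endo) : (a *: f) * g = a *: (f * g).
Proof. by apply: endoP. Qed.
Lemma scaler_mulr a (f g : endo) : f * (a *: g) = a *: (f * g).
Proof. by apply: endoP => x; rewrite /= linearZ. Qed.
Lemma scaler_exp a (f : endo) n : (a *: f) ^+ n = a ^+ n *: f ^+ n.
Proof.
elim: n => [|n IH]; first by rewrite !expr0 scale1r.
by rewrite !exprS IH scaler_mull scaler_mulr scalerA.
Qed.

Definition binom_quot l (a : k) (y : endo) :=
  \sum_(i < l) ('C(l, i.+1)%:R * a ^+ i) *: y ^+ i.

Lemma exprD1_scale l a (y : endo) :
  (1 + a *: y) ^+ l = 1 + binom_quot l a y * (a *: y).
Proof.
rewrite addrC exprD1n big_ord_recl /= expr0 bin0 mulr1n; congr (1 + _).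
rewrite /binom_quot mulr_suml; apply: eq_bigr => i _; rewrite /bump /= add1n.
rewrite scaler_exp scaler_mull scaler_mulr !scalerA -exprSr -scaler_nat scalerA.
by rewrite -mulrA -exprSr mulrC.
Qed.

Lemma binom_quot_split l a (y : endo) : (0 < l)%N ->
  binom_quot l a y = l%:R + \sum_(i < l.-1) ('C(l, i.+2)%:R * a ^+ i.+1) *: y ^+ i.+1.
Proof.
case: l => // l _; rewrite /binom_quot big_ord_recl /= expr0 mulr1 bin1 expr0.
by rewrite scaler_nat; congr (_ + _); apply: eq_bigr => i _; rewrite /bump /= add1n.
Qed.

Lemma endo_scale_divide (T : endo) (c : k) :
  (forall y : M, c *: y = 0 -> y = 0) -> (forall x, exists y, T x = c *: y) ->
  exists h : endo, T = c *: h.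
Proof.
move=> c_inj Tc; pose h x := sval (cid (Tc x)).
have Th x : T x = c *: h x by rewrite /h; case: (cid (Tc x)).
have h_lin : is_End h.
  move=> a x y; apply/eqP; rewrite -subr_eq0; apply/eqP; apply: c_inj.
  by rewrite scalerBr -Th scalerDr scalerA mulrC -scalerA -!Th linearP subrr.
by exists (Endo h_lin); apply: endoP => x; rewrite Th.
Qed.

End Endomorphisms.

(* In lemma names, [lambda] stands for [1 - zp]. *)
Section PrimitiveRoot.
Variables (k : comNzRingType) (iota : {rmorphism k -> algC}).
Hypothesis iota_inj : injective iota.

Lemma iota_mulfI (a : k) : a != 0 -> injective ( *%R a).
Proof.
move=> a0 b c /(congr1 iota); rewrite !rmorphM => /mulfI bc; apply: iota_inj.
by apply: bc; rewrite -(rmorph0 iota) (inj_eq iota_inj).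
Qed.

Variables (p : nat) (zp : k).
Hypotheses (p_pr : prime p) (zpP : p.-primitive_root (iota zp)).

Lemma prim_root_neq1 : zp != 1.
Proof.
apply: contraTneq (prime_gt1 p_pr) => z1.
by have := prim_order_dvd zpP 1; rewrite expr1 z1 rmorph1 eqxx dvdn1 => /eqP ->.
Qed.

Lemma natr_lambda_dvd : exists w, p%:R = (1 - zp) * w.
Proof.
have zp_p : zp ^+ p = 1.
  by apply: iota_inj; rewrite rmorphXn rmorph1 (prim_expr_order zpP).
have sum0 : \sum_(j < p) zp ^+ j = 0.
  apply: (@iota_mulfI (zp - 1)); first by rewrite subr_eq0 prim_root_neq1.
  by rewrite -subrX1 zp_p subrr mulr0.
exists (\sum_(j < p) \sum_(l < j) zp ^+ l).
rewrite mulr_sumr; under eq_bigr do rewrite -onerBX.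
by rewrite sumrB sum0 subr0 sumr_const card_ord.
Qed.

Lemma prod_onerBX_prim_root : \prod_(1 <= i < p) (1 - iota zp ^+ i) = p%:R.
Proof.
have Xp_factor := factor_Xn_sub_1 zpP.
rewrite big_ltn ?prime_gt0 // expr0 subrX1 in Xp_factor.
have /(congr1 (horner^~ 1)) : \prod_(1 <= i < p) ('X - (iota zp ^+ i)%:P) =
    \sum_(i < p) ('X : {poly algC}) ^+ i.
  by apply: (mulfI (negbT (polyXsubC_eq0 (1 : algC)))); rewrite Xp_factor polyC1.
rewrite horner_prod horner_sum; under eq_bigr do rewrite hornerXsubC.
move=> ->.
by under eq_bigr do rewrite hornerXn expr1n; rewrite sumr_const card_ord.
Qed.

Lemma lambda_pow_pred_dvd : exists kappa, (1 - zp) ^+ p.-1 = p%:R * kappa.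
Proof.
have lambda_dvd i : i \in index_iota 1 p -> exists t, 1 - zp = (1 - zp ^+ i) * t.
  rewrite mem_index_iota => /andP [i_gt0 i_lt_p].
  have : p.-primitive_root (iota zp ^+ i).
    rewrite prim_root_exp_coprime // coprime_sym prime_coprime //.
    by apply: contraTN i_lt_p => /(dvdn_leq i_gt0); rewrite -leqNgt.
  move/prim_rootP => /(_ _ (prim_expr_order zpP)) [j zpj].
  exists (\sum_(l < j) (zp ^+ i) ^+ l); rewrite -onerBX -exprM; congr (1 - _).
  by apply: iota_inj; rewrite rmorphXn exprM -zpj.
have [t Ht] := prod_dvd_prod lambda_dvd.
exists t; rewrite -[p.-1]subn1 -prodr_const_nat Ht; congr (_ * _).
apply: iota_inj; rewrite rmorph_prod rmorph_nat -prod_onerBX_prim_root.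
by apply: eq_bigr => i _; rewrite rmorphB rmorph1 rmorphXn.
Qed.

Lemma expr_prime_eq_lambda (a b : k) :
  iota b != 0 -> a ^+ p = b ^+ p -> exists kappa, a - b = (1 - zp) * kappa.
Proof.
move=> b0 ab; have : (iota a / iota b) ^+ p = 1.
  by rewrite exprMn exprVn -!rmorphXn ab divff // rmorphXn expf_neq0.
case/(prim_rootP zpP) => i Hi.
have -> : a = b * zp ^+ i.
  by apply: iota_inj; rewrite rmorphM rmorphXn -Hi mulrC divfK.
exists (- (b * \sum_(l < i) zp ^+ l)).
by rewrite mulrN mulrCA -onerBX -mulrN opprB mulrBr mulr1.
Qed.

End PrimitiveRoot.

Section Eigenvalues.
Variables (e : steinitz) (k : comNzRingType) (iota : {rmorphism k -> algC}).
Hypothesis iota_inj : injective iota.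
Variable M : lmodType k.
Hypothesis torsionfree :
  forall r, prime r -> st_dvd r e -> forall x : M, x *+ r = 0 -> x = 0.

Local Notation mu z := (in_mu e (iota z)).

Lemma mu_expr_eq1 a : mu a ->
  exists n, [/\ (0 < n)%N, a ^+ n = 1 & forall r, prime r -> (r %| n)%N -> st_dvd r e].
Proof.
case=> n [n_gt0 [an n_e]]; exists n; split => //.
  by apply: iota_inj; rewrite rmorphXn rmorph1 (prim_expr_order an).
move=> r r_pr rn; apply: le_exp_trans (n_e r r_pr).
by rewrite logn_gt0 mem_primes r_pr n_gt0 rn.
Qed.

Lemma mu_neq0 a : mu a -> iota a != 0.
Proof.
case=> n [n_gt0 [an _]]; apply/eqP => a0; move: (prim_expr_order an).
by rewrite a0 expr0n eqn0Ngt n_gt0 => /eqP; rewrite eq_sym oner_eq0.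
Qed.

Lemma muX a j : mu a -> mu (a ^+ j).
Proof.
case=> n [n_gt0 [an n_e]].
have : iota (a ^+ j) ^+ n = 1.
  by rewrite rmorphXn -exprM mulnC exprM (prim_expr_order an) expr1n.
case/(prim_order_exists n_gt0) => d ad dn.
exists d; split; first exact: prim_order_gt0 ad.
by split=> // r r_pr; apply: le_exp_trans (n_e r r_pr); apply: dvdn_leq_log.
Qed.

Lemma mu1 : mu 1.
Proof.
have [z z_prim] := C_prim_root_exists (ltn0Sn 0).
exists 1%N; split=> //; split; first by rewrite rmorph1 -(prim_expr_order z_prim) expr1.
by move=> r _; rewrite logn1; case: (e r).
Qed.

Lemma mulrn_eq0_torsionfree N : (0 < N)%N ->
  (forall r, prime r -> (r %| N)%N -> st_dvd r e) -> forall x : M, x *+ N = 0 -> x = 0.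
Proof.
elim/ltn_ind: N => N IH N_gt0 N_e x; have [N_le1|N_gt1] := leqP N 1.
  have -> : N = 1%N by apply/eqP; rewrite eqn_leq N_le1.
  by rewrite mulr1n.
have r_pr := pdiv_prime N_gt1; have rN := pdiv_dvd N.
have Ndec : N = (N %/ pdiv N * pdiv N)%N by rewrite divnK.
rewrite [in x *+ N]Ndec mulrnA => /(torsionfree r_pr (N_e _ r_pr rN)).
apply: IH.
- by rewrite ltn_Pdiv ?prime_gt1.
- by rewrite divn_gt0 ?prime_gt0 // dvdn_leq.
- move=> r r_pr' rd; apply: N_e r_pr' _.
  by rewrite Ndec dvdn_mulr.
Qed.

Lemma scaler_mu_eq0 a b (x : M) : mu a -> mu b -> a != b -> a *: x = b *: x -> x = 0.
Proof.
move=> ma mb ab abx.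
have [na [na_gt0 a_na na_e]] := mu_expr_eq1 ma.
have [nb [nb_gt0 b_nb nb_e]] := mu_expr_eq1 mb.
pose c := a * b ^+ nb.-1.
have b_inv : b ^+ nb.-1 * b = 1 by rewrite -exprSr prednK.
have cx : c *: x = x by rewrite /c mulrC -scalerA abx scalerA b_inv scale1r.
have c_n : c ^+ (na * nb) = 1.
  have b_inv_nb : b ^+ nb.-1 ^+ nb = 1 by rewrite -exprM mulnC exprM b_nb expr1n.
  by rewrite exprMn exprM a_na expr1n mul1r mulnC exprM b_inv_nb expr1n.
have c_neq1 : c - 1 != 0.
  rewrite subr_eq0; apply: contraNneq ab => c1.
  by rewrite -[a]mulr1 -b_inv mulrA -/c c1 mul1r.
have sum_c : \sum_(i < na * nb) c ^+ i = 0.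
  by apply: (iota_mulfI iota_inj c_neq1); rewrite -subrX1 c_n subrr mulr0.
have cix i : c ^+ i *: x = x.
  by elim: i => [|i IH]; rewrite ?scale1r // exprSr -scalerA cx.
apply: (@mulrn_eq0_torsionfree (na * nb)); first by rewrite muln_gt0 na_gt0.
  by move=> r r_pr; rewrite Euclid_dvdM // => /orP [/na_e|/nb_e]; apply.
move: (congr1 (fun t => t *: x) sum_c); rewrite /= scale0r scaler_suml.
by under eq_bigr do rewrite cix; rewrite sumr_const card_ord.
Qed.

Definition eigen_decomp (f : endo M) (s : seq k) (v : k -> M) :=
  [/\ uniq s, {in s, forall z, mu z} & {in s, forall z, f (v z) = z *: v z}].

(* Only the surjectivity half of [mu_diag]: injectivity holds automatically,
   see [eigen_sum_eq0]. *)
Definition eigen_spanning (f : endo M) :=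
  forall x, exists s v, eigen_decomp f s v /\ x = \sum_(z <- s) v z.

Lemma mu_diag_spanning (f : endo M) : mu_diag e iota f -> eigen_spanning f.
Proof. by case=> fspan _ x; have [s [v [us ms fv ->]]] := fspan x; exists s, v. Qed.

Lemma eigen_sum_eq0 f s v : eigen_decomp f s v ->
  \sum_(z <- s) v z = 0 -> {in s, forall z, v z = 0}.
Proof.
elim: s v => [//|z1 s IH] v [/= /andP [z1s us] ms fv].
rewrite big_cons => /eqP; rewrite addr_eq0 => /eqP v1.
have /IH vs : eigen_decomp f s (fun z => (z - z1) *: v z).
  split=> // z zs; first exact/ms/mem_behead.
  by rewrite /= linearZ /= fv ?in_cons ?zs ?orbT // !scalerA mulrC.
have v0 : {in s, forall z, v z = 0}.
  move=> z zs; have z1z : z != z1 by apply: contraNneq z1s => <-.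
  apply: (scaler_mu_eq0 (ms z _) (ms z1 _) z1z); rewrite ?in_cons ?zs ?orbT //.
    exact: mem_head.
  apply/eqP; rewrite -subr_eq0 -scalerBl vs //.
  under eq_bigr do rewrite scalerBl; rewrite sumrB -scaler_sumr.
  have -> : \sum_(z <- s) z *: v z = f (\sum_(z <- s) v z).
    by rewrite linear_sum /=; apply: eq_big_seq => y ys; rewrite fv ?in_cons ?ys ?orbT.
  have -> : \sum_(z <- s) v z = - v z1 by rewrite v1 opprK.
  by rewrite linearN /= fv ?mem_head // scalerN subrr.
move=> z; rewrite in_cons => /orP [/eqP ->|]; last exact: v0.
by rewrite v1 big1_seq ?oppr0 // => z' /andP [_ /v0].
Qed.

Lemma eigen_exp (f : endo M) z x j : f x = z *: x -> (f ^+ j) x = z ^+ j *: x.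
Proof.
move=> fx; elim: j => [|j IH]; first by rewrite expr0 scale1r.
by rewrite exprSr endo_mulE fx linearZ /= IH scalerA -exprS.
Qed.

Lemma eigen_decompX f s v j : eigen_decomp f s v ->
  eigen_decomp (f ^+ j) (undup [seq z ^+ j | z <- s])
    (fun w => \sum_(z <- s | z ^+ j == w) v z).
Proof.
case=> _ ms fv; split; first exact: undup_uniq.
  by move=> w; rewrite mem_undup => /mapP [z zs ->]; apply/muX/ms.
move=> w _; rewrite linear_sum scaler_sumr /= big_seq_cond [RHS]big_seq_cond.
by apply: eq_bigr => z /andP [zs /eqP <-]; apply/eigen_exp/fv.
Qed.

Lemma eigen_spanningX f j : eigen_spanning f -> eigen_spanning (f ^+ j).
Proof.
move=> fspan x; have [s [v [fsv ->]]] := fspan x.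
by do 2 eexists; split; [apply: eigen_decompX fsv | apply: sum_undup_map].
Qed.

Lemma eigen_decomp_comm (g h : endo M) c s w : eigen_decomp g s w -> GRing.comm h g ->
  h (\sum_(z <- s) w z) = c *: \sum_(z <- s) w z -> {in s, forall z, h (w z) = c *: w z}.
Proof.
case=> us ms gw hg hc z zs; apply/eqP; rewrite -subr_eq0; apply/eqP.
move: z zs; apply: (@eigen_sum_eq0 g s (fun z => h (w z) - c *: w z)).
  split=> // z zs; rewrite /= linearB linearZ /= -endo_mulE -hg endo_mulE gw //.
  by rewrite linearZ /= scalerBr !scalerA mulrC.
by rewrite sumrB -linear_sum -scaler_sumr /= hc subrr.
Qed.

Lemma eigen_spanning_order_trivial p a (f : endo M) : prime p -> ~ st_dvd p e ->
  eigen_spanning f -> f ^+ (p ^ a) = 1 -> f = 1.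
Proof.
move=> p_pr pe fspan fpa; apply: endoP => x; have [s [v [[_ ms fv] ->]]] := fspan x.
rewrite linear_sum /=; apply: eq_big_seq => z zs; rewrite fv //.
suff [->|->] : z = 1 \/ v z = 0; [by rewrite scale1r | by rewrite scaler0 |].
have [zpa|zpa] := eqVneq (z ^+ (p ^ a)) 1; last first.
  right; apply: (scaler_mu_eq0 (muX _ (ms z zs)) mu1 zpa).
  by rewrite -(eigen_exp _ (fv z zs)) fpa scale1r.
left; case: (ms z zs) => n [_ [zn n_e]].
have /(dvdn_pfactor _ _ p_pr) [[|m] _ n_pm] : (n %| p ^ a)%N.
  by rewrite (prim_order_dvd zn) -rmorphXn zpa rmorph1.
  by apply: iota_inj; rewrite rmorph1 -(prim_expr_order zn) n_pm expr1.
case: pe; apply: le_exp_trans (n_e p p_pr).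
by rewrite n_pm pfactorK.
Qed.

Lemma eigen_exp_lambda p zp (f : endo M) z w :
  p.-primitive_root (iota zp) -> eigen_spanning f -> mu z ->
  (f ^+ p) w = z ^+ p *: w -> exists y, f w - z *: w = (1 - zp) *: y.
Proof.
move=> zpP fspan mz fpw; have [s [u [[us ms fu] ws]]] := fspan w.
have fpu : {in s, forall y, (f ^+ p) (u y) = z ^+ p *: u y}.
  by apply: (eigen_decomp_comm (g := f)) => //; [apply/commr_sym/commrX/commr_refl | rewrite -ws].
rewrite ws linear_sum scaler_sumr -sumrB /=; apply: sum_scaler_ex => y ys.
move=> _; rewrite fu // -scalerBl.
have [yz|yz] := eqVneq (y ^+ p) (z ^+ p).
  have [kappa ->] := expr_prime_eq_lambda iota_inj zpP (mu_neq0 mz) yz.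
  by exists (kappa *: u y); rewrite scalerA.
have -> : u y = 0.
  apply: (scaler_mu_eq0 (muX p (ms y ys)) (muX p mz) yz).
  by rewrite -(eigen_exp p (fu y ys)) fpu.
by exists 0; rewrite !scaler0.
Qed.

Section Commutator.
Variables (p q : nat) (zp zq : k).
Hypotheses (zpP : p.-primitive_root (iota zp)) (zqP : q.-primitive_root (iota zq)).
Variables (f g : endo M).
Hypotheses (fspan : eigen_spanning f) (gspan : eigen_spanning g).
Hypotheses (fp_g : GRing.comm (f ^+ p) g) (f_gq : GRing.comm f (g ^+ q)).

Lemma commutator_eigen_lambda u z : mu z -> f u = z *: u ->
  exists y, (f * g - g * f) u = ((1 - zp) * (1 - zq)) *: y.
Proof.
(* On the [g]-eigencomponents [w h] of [u], [f - z] is divisible by [lambda_p] since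
   [f^p] commutes with [g]; components with the same [h^q] have an [f]-eigenvector as sum
   since [f] commutes with [g^q], so [h] may be replaced by [h - r] with [r^q = h^q]. *)
move=> mz fu; have [t [w [gtw ue]]] := gspan u; have [_ mt gw] := gtw.
pose Y h := f (w h) - z *: w h.
have Y_lambda : {in t, forall h, exists y, Y h = (1 - zp) *: y}.
  move=> h ht; apply: (eigen_exp_lambda zpP) => //.
  by apply: (eigen_decomp_comm gtw fp_g _ ht); rewrite -ue (eigen_exp _ fu).
have Y_class : {in undup [seq h ^+ q | h <- t],
    forall xi, \sum_(h <- t | h ^+ q == xi) Y h = 0}.
  move=> xi xit; apply/eqP; rewrite sumrB -linear_sum -scaler_sumr subr_eq0 /=.
  apply/eqP; apply: (eigen_decomp_comm (eigen_decompX q gtw) f_gq _ xit).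
  by rewrite -sum_undup_map -ue.
have -> : (f * g - g * f) u = \sum_(h <- t) h *: Y h.
  rewrite /= fu linearZ ue !linear_sum /= scaler_sumr -sumrB.
  apply: eq_big_seq => h ht; rewrite gw // linearZ /= scalerBr !scalerA.
  by rewrite (mulrC h).
rewrite (sum_undup_map _ (fun h => h ^+ q)); apply: sum_scaler_ex => xi xit _.
have [r rt rxi] : exists2 r, r \in t & xi = r ^+ q by apply/mapP; rewrite -mem_undup.
have -> : \sum_(h <- t | h ^+ q == xi) h *: Y h =
          \sum_(h <- t | h ^+ q == xi) (h - r) *: Y h.
  under [RHS]eq_bigr do rewrite scalerBl.
  by rewrite sumrB -scaler_sumr Y_class // scaler0 subr0.
apply: sum_scaler_ex => h ht /eqP hxi; rewrite rxi in hxi.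
have [kappa ->] := expr_prime_eq_lambda iota_inj zqP (mu_neq0 (mt r rt)) hxi.
have [y ->] := Y_lambda h ht.
by exists (kappa *: y); rewrite !scalerA mulrC mulrA.
Qed.

Lemma commutator_lambda x :
  exists y, (f * g - g * f) x = ((1 - zp) * (1 - zq)) *: y.
Proof.
have [s [u [[_ ms fu] ->]]] := fspan x.
rewrite linear_sum /=; apply: sum_scaler_ex => z zs _.
exact: commutator_eigen_lambda (ms z zs) (fu z zs).
Qed.

End Commutator.
End Eigenvalues.

Section GoodSubalgebra.
Variables (e : steinitz) (k : comNzRingType) (iota : {rmorphism k -> algC}).
Hypothesis iota_inj : injective iota.
Hypothesis iota_img : forall x : algC, in_Zmu e x <-> exists a : k, x = iota a.
Variables (M : lmodType k) (A : (M -> M) -> Prop).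
Hypothesis hA : is_subalg A.
Hypothesis hgood : forall p, prime p -> st_dvd p e ->
  p_good p A /\
  forall zp : k, p.-primitive_root (iota zp) ->
    forall f : M -> M,
      (exists g, A g /\ f = (fun x => (1 - zp) *: g x)) <->
      (A f /\ exists h, is_End h /\ f = (fun x => (1 - zp) *: h x)).

Definition inA : {pred endo M} := fun f => `[< A f >].

Lemma inAP (f : endo M) : reflect (A f) (f \in inA).
Proof. exact: asboolP. Qed.

Fact inA_subring_closed : subring_closed inA.
Proof.
case: hA => _ [A1 _ AD AZ AM]; split; first exact/inAP.
  move=> f g /inAP Af /inAP Ag; apply/inAP; apply: AD Af _.
  by have := AZ (-1) _ Ag; congr A; apply: funext => x; rewrite scaleN1r.
by move=> f g /inAP Af /inAP Ag; apply/inAP; apply: AM.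
Qed.

HB.instance Definition _ := GRing.isSubringClosed.Build (endo M) inA inA_subring_closed.

Lemma inAZ a (f : endo M) : f \in inA -> a *: f \in inA.
Proof. by case: hA => _ [_ _ _ AZ _] /inAP Af; apply/inAP/AZ. Qed.

Lemma inA_endo (f : M -> M) : A f -> exists2 F : endo M, F \in inA & endo_fun F = f.
Proof.
by case: hA => A_End _ Af; exists (Endo (A_End f Af)) => //; apply/inAP.
Qed.

Lemma torsionfree_of_good r : prime r -> st_dvd r e -> forall x : M, x *+ r = 0 -> x = 0.
Proof.
move=> r_pr re x xr; have [good _] := hgood r_pr re; case: hA => _ [_ A0 _ _ _].
by apply: (good _ A0); rewrite /= !mul0rn !subr0 xr mul0rn.
Qed.

Lemma prim_root_in_k p : prime p -> st_dvd p e -> exists zp : k, p.-primitive_root (iota zp).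
Proof.
move=> p_pr pe; have [z zP] := C_prim_root_exists (prime_gt0 p_pr).
have /iota_img [a za] : in_Zmu e z.
  move=> S _ _ _; apply; exists p; split; first exact: prime_gt0.
  split=> // r r_pr; rewrite logn_prime //; case: eqP => [->|_] //.
  by case: (e r).
by exists a; rewrite -za.
Qed.

Lemma p_good_inj p (s : endo M) : prime p -> st_dvd p e -> s \in inA ->
  injective (1 - p%:R * s).
Proof.
move=> p_pr pe /inAP As x y; have [good _] := hgood p_pr pe.
by move=> /(congr1 (fun z => z *+ p)); rewrite /= !endo_natE; apply: good.
Qed.

Section Lambda.
Variables (p : nat) (zp : k).
Hypotheses (p_pr : prime p) (pe : st_dvd p e) (zpP : p.-primitive_root (iota zp)).

Lemma lambda_scale_eq0 (x : M) : (1 - zp) *: x = 0 -> x = 0.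
Proof.
move=> x0; have [w pw] := natr_lambda_dvd iota_inj p_pr zpP.
apply: (torsionfree_of_good p_pr pe).
by rewrite -scaler_nat pw mulrC -scalerA x0 scaler0.
Qed.

Lemma inA_lambda_div (h : endo M) : (1 - zp) *: h \in inA -> h \in inA.
Proof.
move=> /inAP Ah; have [_ /(_ zp zpP) sat] := hgood p_pr pe.
have [|g [Ag gh]] := (sat (endo_fun ((1 - zp) *: h))).2.
  by split=> //; exists h; split=> //; apply: endo_linear.
suff hg : endo_fun h = g by apply/inAP; rewrite hg.
apply: funext => x; apply/eqP; rewrite -subr_eq0; apply/eqP; apply: lambda_scale_eq0.
by rewrite scalerBr; move: (congr1 (fun F => F x) gh) => /= <-; rewrite subrr.
Qed.

Lemma one_plus_lambda_inj (Z : endo M) : Z \in inA -> injective (1 + (1 - zp) *: Z).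
Proof.
move=> AZ; have [kappa lambda_kappa] := lambda_pow_pred_dvd iota_inj p_pr zpP.
(* [(1 + u) (\sum_(i < p.-1) (-u)^i) = 1 - (-u)^(p.-1)], and [(1 - zp)^(p.-1)] is a
   multiple of [p], so p-goodness applies. *)
pose u := (1 - zp) *: Z; pose N := p.-1; pose S := \sum_(i < N) (- u) ^+ i.
pose s := ((-1) ^+ N * kappa) *: Z ^+ N.
have uN : (- u) ^+ N = p%:R * s.
  rewrite -scaleNr scaler_exp exprNn lambda_kappa scaler_mulr (mulr_natl (Z ^+ N)).
  by rewrite -scaler_nat scalerA; congr (_ *: _); ring.
have S_u : S * (1 + u) = 1 - p%:R * s.
  rewrite -uN -[RHS]opprB subrX1 -mulNr opprB opprK; apply/esym/commr_sum => i _.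
  by apply/commrX/commrN/commr_sym/commrD; [apply: commr1 | apply: commr_refl].
have As : s \in inA by apply/inAZ/rpredX.
have : injective (S * (1 + u)) by rewrite S_u; apply: p_good_inj.
by move=> Su_inj x y xy; apply: Su_inj; rewrite !endo_mulE; congr (S _).
Qed.

End Lambda.

Lemma inA_sum_multiple n (c : nat -> k) (a : k) (y : endo M) : y \in inA ->
  (forall i, (i < n)%N -> exists d, c i.+1 = a * d) ->
  exists2 Z, Z \in inA & \sum_(i < n) c i.+1 *: y ^+ i.+1 = a *: Z.
Proof.
move=> Ay; elim: n => [|n IH] ca; first by exists 0; rewrite ?rpred0 ?big_ord0 ?scaler0.
rewrite big_ord_recr /=; have [Z AZ ->] := IH (fun i lt_in => ca i (ltnW lt_in)).
have [d ->] := ca n (ltnSn n).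
exists (Z + d *: y ^+ n.+1); first by rewrite rpredD ?inAZ ?rpredX.
by rewrite scalerDr scalerA.
Qed.

Lemma binom_quot_inj_coprime l r zr nu (y : endo M) :
  prime l -> prime r -> st_dvd r e -> r.-primitive_root (iota zr) -> l != r ->
  y \in inA -> injective (binom_quot l ((1 - zr) * nu) y).
Proof.
move=> l_pr r_pr re zrP lr Ay; rewrite (binom_quot_split _ _ (prime_gt0 l_pr)).
have [|Z AZ ->] := @inA_sum_multiple l.-1
    (fun j => 'C(l, j.+1)%:R * ((1 - zr) * nu) ^+ j) (1 - zr) y Ay.
  move=> i _; exists ('C(l, i.+2)%:R * ((1 - zr) * nu) ^+ i * nu).
  by rewrite /= exprSr; ring.
(* A Bezout relation [1 + a l = b r] turns [- a (l + lambda_r Z)] into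
   [1 + lambda_r Z']. *)
have /eqnP rl : coprime r l by rewrite prime_coprime // dvdn_prime2 // eq_sym.
have [a _ al] := Bezoutl l (prime_gt0 r_pr); rewrite rl in al.
pose b := ((1 + a * l) %/ r)%N; have abl : (1 + a * l = b * r)%N by rewrite divnK.
have [w rw] := natr_lambda_dvd iota_inj r_pr zrP.
pose Z' : endo M := (- (b%:R * w)) *: (1 : endo M) - a%:R *: Z.
have /one_plus_lambda_inj : Z' \in inA by rewrite rpredB ?inAZ ?rpred1.
move=> /(_ r zr r_pr re zrP) inj_aF.
have ablk : 1 + a%:R * l%:R = b%:R * r%:R :> k.
  by move: (congr1 (GRing.natmul (1 : k)) abl); rewrite /= natrD !natrM.
have aF : (- a%:R) *: (l%:R + (1 - zr) *: Z) = 1 + (1 - zr) *: Z'.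
  apply: endoP => x /=; rewrite endo_natE -scaler_nat scalerDr scalerBr !scalerA.
  rewrite -{3}[x]scale1r addrA -scalerDl -scaleNr.
  congr (_ *: _ + _ *: _); last by ring.
  by transitivity (1 - b%:R * r%:R : k); [rewrite -ablk | rewrite rw]; ring.
move=> x1 x2 x12; apply: inj_aF; rewrite -aF /=; congr (_ *: _); exact: x12.
Qed.

Lemma natr_endo_inj p : prime p -> st_dvd p e -> injective (p%:R : endo M).
Proof.
move=> p_pr pe x y; rewrite !endo_natE => /eqP; rewrite -subr_eq0 -mulrnBl => /eqP.
by move/(torsionfree_of_good p_pr pe)/eqP; rewrite subr_eq0 => /eqP.
Qed.

Lemma binom_quot_inj_same p zp nu (y : endo M) :
  prime p -> st_dvd p e -> p.-primitive_root (iota zp) -> y \in inA ->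
  injective (binom_quot p ((1 - zp) * (1 - zp) * nu) y).
Proof.
move=> p_pr pe zpP Ay; rewrite (binom_quot_split _ _ (prime_gt0 p_pr)).
set kappa := (1 - zp) * (1 - zp) * nu.
have [w pw] := natr_lambda_dvd iota_inj p_pr zpP.
have [beta lambda_beta] := lambda_pow_pred_dvd iota_inj p_pr zpP.
have [i lt_ip|Z AZ ->] := @inA_sum_multiple p.-1
    (fun j => 'C(p, j.+1)%:R * kappa ^+ j) (p%:R * (1 - zp)) y Ay.
  rewrite /=; have [lt_i2p|ge_i2p] := ltnP i.+2 p.
    have /dvdnP [c ->] : (p %| 'C(p, i.+2))%N by rewrite prime_dvd_bin ?lt_i2p.
    by exists (c%:R * kappa ^+ i * (1 - zp) * nu); rewrite natrM exprSr /kappa; ring.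
  have -> : i.+1 = p.-1 by move: lt_ip ge_i2p; lia.
  exists (w * beta ^+ 2 * nu ^+ p.-1).
  rewrite prednK ?prime_gt0 // binn mul1r /kappa !exprMn lambda_beta.
  by rewrite pw; ring.
have -> : p%:R + (p%:R * (1 - zp)) *: Z = p%:R * (1 + (1 - zp) *: Z).
  by rewrite [RHS]mulrDr mulr1 -scalerA scaler_nat mulr_natl.
move=> x1 x2 /(natr_endo_inj p_pr pe); exact: (one_plus_lambda_inj p_pr pe zpP AZ).
Qed.

Lemma binom_quot_inA l a (y : endo M) : y \in inA -> binom_quot l a y \in inA.
Proof. by move=> Ay; apply: rpred_sum => i _; rewrite inAZ ?rpredX. Qed.

Section Unipotent.
Variables (p q : nat) (zp zq : k).
Hypotheses (p_pr : prime p) (pe : st_dvd p e) (zpP : p.-primitive_root (iota zp)).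
Hypotheses (q_pr : prime q) (qe : st_dvd q e) (zqP : q.-primitive_root (iota zq)).

Definition in_lambda2A (t : endo M) :=
  exists2 y, y \in inA & t = ((1 - zp) * (1 - zq)) *: y.

Lemma in_lambda2A_expr t m : in_lambda2A t ->
  exists2 t', in_lambda2A t' & (1 + t) ^+ m = 1 + t'.
Proof.
case=> y Ay ->; rewrite exprD1_scale scaler_mulr.
set F := binom_quot m _ y; exists (((1 - zp) * (1 - zq)) *: (F * y)) => //.
by exists (F * y); rewrite ?rpredM ?binom_quot_inA.
Qed.

Lemma unipotent_prime_order l t : prime l -> in_lambda2A t -> (1 + t) ^+ l = 1 -> t = 0.
Proof.
move=> l_pr [y Ay ->]; rewrite exprD1_scale -[RHS]addr0 => /addrI F0.
suff F_inj : injective (binom_quot l ((1 - zp) * (1 - zq)) y).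
  by apply: endoP => x; apply: F_inj; rewrite -endo_mulE F0 /= linear0.
have [lp|/binom_quot_inj_coprime] := eqVneq l p; last exact.
have [lq|/binom_quot_inj_coprime] := eqVneq l q; last by rewrite mulrC; apply.
have zqP' : p.-primitive_root (iota zq) by rewrite -lp lq.
have [j zqj] := prim_rootP zpP (prim_expr_order zqP').
have -> : 1 - zq = (1 - zp) * \sum_(i < j) zp ^+ i.
  by rewrite -onerBX; congr (1 - _); apply: iota_inj; rewrite rmorphXn.
by rewrite lp mulrA; apply: binom_quot_inj_same.
Qed.

Lemma unipotent_finite_order N t : (0 < N)%N -> in_lambda2A t -> (1 + t) ^+ N = 1 -> t = 0.
Proof.
elim/ltn_ind: N t => N IH t N_gt0 tA tN; have [N_le1|N_gt1] := leqP N 1.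
  have N1 : N = 1%N by apply/eqP; rewrite eqn_leq N_le1.
  by move: tN; rewrite N1 expr1 -[RHS]addr0 => /addrI.
have l_pr := pdiv_prime N_gt1; have lN := pdiv_dvd N.
have [t' t'A tt'] := in_lambda2A_expr (N %/ pdiv N) tA.
have t'0 : t' = 0 by apply: (unipotent_prime_order l_pr t'A); rewrite -tt' -exprM divnK.
have lt_N : (N %/ pdiv N < N)%N := ltn_Pdiv (prime_gt1 l_pr) N_gt0.
have gt0 : (0 < N %/ pdiv N)%N by rewrite divn_gt0 ?prime_gt0 // dvdn_leq.
by apply: (IH _ lt_N t gt0 tA); rewrite tt' t'0 addr0.
Qed.
End Unipotent.

Local Notation spanning := (eigen_spanning e iota).

Variables (rho sigma : M -> M).
Hypothesis htors : torsion2 rho sigma.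

Definition admissible (f : endo M) := [/\ f \in inA, spanning f & gen2 rho sigma f].

Lemma gen2M (f g : endo M) : gen2 rho sigma f -> gen2 rho sigma g -> gen2 rho sigma (f * g).
Proof. exact: gen2_comp. Qed.

Lemma gen2X (f : endo M) n : gen2 rho sigma f -> gen2 rho sigma (f ^+ n).
Proof.
move=> Gf; elim: n => [|n IH]; first exact: gen2_id.
by rewrite exprS; apply: gen2M.
Qed.

Lemma gen2_finite_order (f : endo M) :
  gen2 rho sigma f -> exists2 N, (0 < N)%N & f ^+ N = 1.
Proof. by case/htors => N [N_gt0 fN]; exists N => //; apply: endoP => x; rewrite endo_expE fN. Qed.

Lemma admissibleX f n : admissible f -> admissible (f ^+ n).
Proof.
by case=> Af fspan Gf; split; [apply: rpredX | apply: eigen_spanningX | apply: gen2X].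
Qed.

Lemma comm_of_comm_powers p q (f g : endo M) n m :
  prime p -> st_dvd p e -> prime q -> st_dvd q e ->
  admissible f -> admissible g -> f ^+ n.+1 = 1 -> g ^+ m.+1 = 1 ->
  GRing.comm (f ^+ p) g -> GRing.comm f (g ^+ q) ->
  GRing.comm f g.
Proof.
move=> p_pr pe q_pr qe [Af fspan Gf] [Ag gspan Gg] fn gm fp_g f_gq.
have [zp zpP] := prim_root_in_k p_pr pe; have [zq zqP] := prim_root_in_k q_pr qe.
(* [c] is the commutator [f g f^-1 g^-1]. *)
pose c := f * g * f ^+ n * g ^+ m.
have c1 : c - 1 = (f * g - g * f) * (f ^+ n * g ^+ m).
  by rewrite mulrBl !mulrA -[g * f * _]mulrA -exprS fn mulr1 -exprS gm.
have [h ch] : exists h : endo M, c - 1 = ((1 - zp) * (1 - zq)) *: h.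
  apply: endo_scale_divide => [y|x].
    by rewrite -scalerA => /(lambda_scale_eq0 p_pr pe zpP)/(lambda_scale_eq0 q_pr qe zqP).
  rewrite c1 endo_mulE.
  exact: (commutator_lambda iota_inj torsionfree_of_good zpP zqP fspan gspan fp_g f_gq _).
have Ah : h \in inA.
  apply: (inA_lambda_div q_pr qe zqP); apply: (inA_lambda_div p_pr pe zpP).
  by rewrite scalerA -ch rpredB ?rpred1 ?rpredM ?rpredX.
have [N N_gt0 cN] : exists2 N, (0 < N)%N & c ^+ N = 1.
  by apply: gen2_finite_order; rewrite /c; do ![apply: gen2M | apply: gen2X].
have /eqP : c - 1 = 0.
  apply: (unipotent_finite_order p_pr pe zpP q_pr qe zqP N_gt0); first by exists h.
  by rewrite addrC subrK.
rewrite subr_eq0 => /eqP c_1.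
rewrite /GRing.comm -[RHS]mul1r -c_1 /c -!mulrA (mulrA (g ^+ m)) -exprSr gm mul1r.
by rewrite -exprSr fn mulr1.
Qed.

Lemma comm_prime_power p q a b (f g : endo M) : prime p -> prime q ->
  admissible f -> admissible g -> f ^+ (p ^ a) = 1 -> g ^+ (q ^ b) = 1 ->
  GRing.comm f g.
Proof.
move=> p_pr q_pr; have [n] := ubnP (a + b); elim: n => // n IH in a b f g *.
rewrite ltnS => ab_n adm_f adm_g fpa gqb.
have [fspan gspan] : spanning f /\ spanning g by case: adm_f; case: adm_g.
case: (pselect (st_dvd p e)) => [pe|pe]; last first.
  by rewrite (eigen_spanning_order_trivial iota_inj torsionfree_of_good p_pr pe fspan fpa);
    apply/commr_sym/commr1.
case: (pselect (st_dvd q e)) => [qe|qe]; last first.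
  by rewrite (eigen_spanning_order_trivial iota_inj torsionfree_of_good q_pr qe gspan gqb);
    apply: commr1.
case: a ab_n fpa => [|a] ab_n fpa; first by move: fpa; rewrite expr1 => ->; apply/commr_sym/commr1.
case: b ab_n gqb => [|b] ab_n gqb; first by move: gqb; rewrite expr1 => ->; apply: commr1.
have [n' fn'] : exists n', f ^+ n'.+1 = 1.
  by exists (p ^ a.+1).-1; rewrite prednK ?expn_gt0 ?prime_gt0.
have [m' gm'] : exists m', g ^+ m'.+1 = 1.
  by exists (q ^ b.+1).-1; rewrite prednK ?expn_gt0 ?prime_gt0.
apply: (comm_of_comm_powers p_pr pe q_pr qe adm_f adm_g fn' gm').
  apply: (IH a b.+1 _ _ _ (admissibleX p adm_f) adm_g _ gqb); first by rewrite -addSn.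
  by rewrite -exprM -expnS.
apply: (IH a.+1 b _ _ _ adm_f (admissibleX q adm_g) fpa); first by rewrite -addnS.
by rewrite -exprM -expnS.
Qed.

Lemma admissible_comm (f g : endo M) : admissible f -> admissible g -> GRing.comm f g.
Proof.
move=> adm_f adm_g.
case: (adm_f) => _ _ /gen2_finite_order [n n_gt0 fn].
case: (adm_g) => _ _ /gen2_finite_order [m m_gt0 gm].
apply: (commr_finite_order admissibleX _ adm_f n_gt0 fn) => f' p a p_pr adm_f' f'pa.
apply/commr_sym/(commr_finite_order admissibleX _ adm_g m_gt0 gm) => g' q b q_pr adm_g' g'qb.
exact/commr_sym/(comm_prime_power p_pr q_pr adm_f' adm_g' f'pa g'qb).
Qed.

End GoodSubalgebra.

Theorem mainTheorem20
  (e : steinitz)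
  (k : comNzRingType) (iota : {rmorphism k -> algC})
  (iota_inj : injective iota)
  (iota_img : forall x : algC, in_Zmu e x <-> exists a : k, x = iota a)
  (M : lmodType k) (A : (M -> M) -> Prop)
  (hA : is_subalg A)
  (hgood : forall p, prime p -> st_dvd p e ->
     p_good p A /\
     forall zp : k, p.-primitive_root (iota zp) ->
       forall f : M -> M,
         (exists g, A g /\ f = (fun x => (1 - zp) *: g x)) <->
         (A f /\ exists h, is_End h /\ f = (fun x => (1 - zp) *: h x)))
  (rho sigma : M -> M) (hrho : A rho) (hsigma : A sigma)
  (drho : mu_diag e iota rho) (dsigma : mu_diag e iota sigma)
  (htors : torsion2 rho sigma) :
  (fun x => rho (sigma x)) = (fun x => sigma (rho x)).
Proof.
have [R AR defR] := inA_endo hA hrho; have [S AS defS] := inA_endo hA hsigma.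
subst rho sigma.
have RS := admissible_comm iota_inj iota_img hA hgood htors
  (And3 AR (mu_diag_spanning drho) (gen2_r _ _))
  (And3 AS (mu_diag_spanning dsigma) (gen2_s _ _)).
by apply: funext => x; rewrite -!endo_mulE RS.
Qed.
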